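(* $\operatorname{Sort} \equiv_{\mathrm{sW}} \min^-_{\omega+1}$.
   Context: Represented spaces: a representation of a set $X$ is a partial surjection $\delta_X:\subseteq\mathbb{N}^\mathbb{N}\to X$. For a partial multi-valued function $f:\subseteq X\rightrightarrows Y$ between represented spaces, a realizer is a partial $F:\subseteq\mathbb{N}^\mathbb{N}\to\mathbb{N}^\mathbb{N}$ with $\delta_Y(F(p))\in f(\delta_X(p))$ for all $p$ with $\delta_X(p)\in\mathrm{dom}(f)$. Strong Weihrauch reducibility: $f\le_{\mathrm{sW}} g$ iff there are computable partial $H,K:\subseteq\mathbb{N}^\mathbb{N}\to\mathbb{N}^\mathbb{N}$ such that $H\circ G\circ K$ is a realizer of $f$ for every realizer $G$ of $g$; $\equiv_{\mathrm{sW}}$ denotes reducibility in both directions. $\operatorname{Sort}:2^\mathbb{N}\to 2^\mathbb{N}$ is defined by $\operatorname{Sort}(p)=0^n1^\mathbb{N}$ if $p$ contains exactly $n$ occurrences of $0$, and $\operatorname{Sort}(p)=0^\mathbb{N}$ if $p$ contains infinitely many occurrences of $0$. $\omega+1:=\{-2^{-n}:n\in\mathbb{N}\}\cup\{0\}\subseteq\mathbb{R}$, a computable metric space with the Euclidean metric and dense set $\omega+1$ itself; its points are represented by the Cauchy representation (effective Cauchy sequences from $\omega+1$, i.e. sequences $(a_i)$ with $|a_i-a_j|\le 2^{-i}$ for $j\ge i$). Closed subsets of $\omega+1$ are represented negatively ($\mathcal{A}_-(\omega+1)$): a name of a closed $A$ is an enumeration of basic open balls $B(a,q)$ (with $a\in\omega+1$,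 $q$ a nonnegative rational) whose union is $(\omega+1)\setminus A$. $\min^-_{\omega+1}:\subseteq\mathcal{A}_-(\omega+1)\to\omega+1$ maps each nonempty closed $A$ to $\min A$ (with respect to the usual order of $\mathbb{R}$). *)

From Stdlib Require Import Reals Lra Lia Arith List.
Import ListNotations.
Open Scope R_scope.

Definition baire := nat -> nat.
(** A partial function F :⊆ N^N -> N^N ; [F p = None] means p ∉ dom F. *)
Definition pfun := baire -> option baire.

Inductive recf : Type :=
| RZero : recf
| RSucc : recf
| RProj : nat -> recf
| RComp : recf -> list recf -> recf
| RPrec : recf -> recf -> recf
| RMu   : recf -> recf.

Inductive eval : recf -> list nat -> nat -> Prop :=
| ev_zero : forall v, eval RZero v 0
| ev_succ : forall x v, eval RSucc (x :: v) (S x)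
| ev_proj : forall i v x, nth_error v i = Some x -> eval (RProj i) v x
| ev_comp : forall f gs v ws y,
    evals gs v ws -> eval f ws y -> eval (RComp f gs) v y
| ev_prec0 : forall f g v y, eval f v y -> eval (RPrec f g) (0%nat :: v) y
| ev_precS : forall f g n v z y,
    eval (RPrec f g) (n :: v) z -> eval g (n :: z :: v) y ->
    eval (RPrec f g) (S n :: v) y
| ev_mu : forall f v y,
    eval f (y :: v) 0 ->
    (forall z, (z < y)%nat -> exists w, eval f (z :: v) (S w)) ->
    eval (RMu f) v y
with evals : list recf -> list nat -> list nat -> Prop :=
| evs_nil : forall v, evals [] v []
| evs_cons : forall g gs v y ys,
    eval g v y -> evals gs v ys -> evals (g :: gs) v (y :: ys).

Definition cpair (a b : nat) : nat := ((a + b) * (a + b + 1) / 2 + b)%nat.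
Fixpoint lcode (l : list nat) : nat :=
  match l with
  | [] => 0%nat
  | x :: t => S (cpair x (lcode t))
  end.

Definition pre (p : baire) (m : nat) : list nat := map p (seq 0 m).

Definition wout (e : recf) (p : baire) (m : nat) (w : list nat) : Prop :=
  eval e [lcode (pre p m)] (lcode w).

Definition computes (e : recf) (p q : baire) : Prop :=
  (forall m, exists w, wout e p m w) /\
  (forall m w w', wout e p m w -> wout e p (S m) w' -> exists t, w' = w ++ t) /\
  (forall n, exists m w, wout e p m w /\ nth_error w n = Some (q n)).

Definition computable (F : pfun) : Prop :=
  exists e, forall p q, F p = Some q -> computes e p q.

Record rep_space := {
  carrier : Type;
  delta : baire -> carrier -> Prop  (* graph of the partial surjection δ_X *)
}.

(** A partial multi-valued function f :⊆ X ⇉ Y, given by its graph: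
    [f x y] means y ∈ f(x); dom f = { x | exists y, f x y }. *)
Definition problem (X Y : rep_space) := carrier X -> carrier Y -> Prop.

Definition realizer {X Y : rep_space} (f : problem X Y) (F : pfun) : Prop :=
  forall p x, delta X p x -> (exists y, f x y) ->
    exists r, F p = Some r /\ exists y, delta Y r y /\ f x y.

Definition pcomp (H G K : pfun) : pfun :=
  fun p => match K p with
           | None => None
           | Some q => match G q with
                       | None => None
                       | Some s => H s
                       end
           end.

Definition sW_le {X Y U V : rep_space} (f : problem X Y) (g : problem U V) : Prop :=
  exists H K : pfun, computable H /\ computable K /\
    forall G : pfun, realizer g G -> realizer f (pcomp H G K).

Definition sW_equiv {X Y U V : rep_space} (f : problem X Y) (g : problem U V) : Prop :=
  sW_le f g /\ sW_le g f.

Definition cantor : rep_space := {|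
  carrier := nat -> bool;
  delta := fun p b => forall n, (p n = 0%nat /\ b n = false) \/ (p n = 1%nat /\ b n = true)
|}.

Fixpoint zeros_upto (b : nat -> bool) (m : nat) : nat :=
  match m with
  | O => O
  | S k => (zeros_upto b k + (if b k then 0 else 1))%nat
  end.

Definition exactly_zeros (b : nat -> bool) (n : nat) : Prop :=
  exists M, forall m, (M <= m)%nat -> zeros_upto b m = n.

Definition inf_zeros (b : nat -> bool) : Prop :=
  forall N, exists i, (N <= i)%nat /\ b i = false.

Definition Sort : problem cantor cantor := fun p q =>
  (exists n, exactly_zeros p n /\ forall i, q i = Nat.leb n i) \/
  (inf_zeros p /\ forall i, q i = false).

Definition in_omega1 (x : R) : Prop := x = 0 \/ exists n, x = - (/2) ^ n.

Definition nu (k : nat) : R :=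
  match k with
  | O => 0
  | S n => - (/2) ^ n
  end.

Definition omega1 : rep_space := {|
  carrier := R;
  delta := fun p x =>
    (forall i j, (i <= j)%nat -> Rabs (nu (p i) - nu (p j)) <= (/2) ^ i) /\
    Un_cv (fun i => nu (p i)) x
|}.

Definition in_ball (b : nat) (x : R) : Prop :=
  exists a m d, b = cpair a (cpair m d) /\
    in_omega1 x /\ Rabs (x - nu a) < INR m / INR (S d).

(** Negative representation of closed subsets of ω+1: p(i) = 0 enumerates
    nothing, p(i) = b+1 enumerates ball b; the name denotes the complement
    in ω+1 of the union of the enumerated balls. *)
Definition closed_omega1 : rep_space := {|
  carrier := R -> Prop;
  delta := fun p A => forall x,
    A x <-> (in_omega1 x /\ ~ exists i b, p i = S b /\ in_ball b x)
|}.

Definition min_omega1 : problem closed_omega1 omega1 := fun A y =>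
  A y /\ forall z, A z -> y <= z.

(* Sort <= min: a name of b : 2^N becomes the negative name of the closed set
   obtained from omega+1 by deleting -2^-k as soon as the k-th zero of b shows up.
   Its minimum is -2^-n when b has exactly n zeros and 0 when b has infinitely
   many, and a 2^-(i+2)-approximation of the minimum decides whether n <= i, which
   is the i-th bit of Sort(b).

   min <= Sort: from a name of A, track a candidate -2^-L, starting with L = 0,
   and emit a 0 exactly when some enumerated ball is seen to cover the current
   candidate (then L increases) and a 1 otherwise. The number of 0s is n when
   min A = -2^-n and infinite when min A = 0, so Sort returns 0^n 1^N resp. 0^N,
   from which the Cauchy name i |-> -2^-min(i,n) is read off.

   All four translations are total, and letter i of each output depends
   primitive-recursively on a prefix of the input of length i + L for a fixed
   lag L; such maps are computed by type-2 machines. *)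

From Stdlib Require Import Reals Lra Lia Arith List Classical.
Import ListNotations.
Open Scope bool_scope.
Open Scope nat_scope.

Fixpoint mu_free (e : recf) : bool :=
  match e with
  | RMu _ => false
  | RComp f gs => mu_free f && (fix all_mu_free (l : list recf) : bool :=
       match l with [] => true | g :: t => mu_free g && all_mu_free t end) gs
  | RPrec f g => mu_free f && mu_free g
  | _ => true
  end.

Lemma mu_free_comp f gs : mu_free (RComp f gs) = mu_free f && forallb mu_free gs.
Proof. reflexivity. Qed.

Scheme eval_mut_ind := Induction for eval Sort Prop
  with evals_mut_ind := Induction for evals Sort Prop.

Lemma eval_det e v y : eval e v y -> mu_free e = true -> forall y', eval e v y' -> y = y'.
Proof.
  revert e v y.
  apply (eval_mut_ind
    (fun e v y _ => mu_free e = true -> forall y', eval e v y' -> y = y')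
    (fun gs v ys _ => forallb mu_free gs = true -> forall ys', evals gs v ys' -> ys = ys')).
  - intros v _ y' H; inversion H; auto.
  - intros x v _ y' H; inversion H; auto.
  - intros i v x e _ y' H; inversion H; subst; congruence.
  - intros f gs v ws y Hs IHs He IHe Hm y' H. rewrite mu_free_comp in Hm.
    apply andb_prop in Hm as [Hm1 Hm2]. inversion H; subst.
    assert (ws = ws0) by (apply IHs; auto). subst. apply IHe; auto.
  - intros f g v y He IHe Hm y' H. apply andb_prop in Hm as [Hm1 _].
    inversion H; subst. apply IHe; auto.
  - intros f g n v z y H1 IH1 H2 IH2 Hm y' H. inversion H; subst.
    assert (z = z0) by (apply IH1; auto). subst.
    apply andb_prop in Hm as [_ Hm2]. apply IH2; auto.
  - discriminate.
  - intros v _ ys' H; inversion H; auto.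
  - intros g gs v y ys Hg IHg Hs IHs Hm ys' H. apply andb_prop in Hm as [Hm1 Hm2].
    inversion H; subst. f_equal; auto.
Qed.

(** * Primitive recursive functions *)

Definition primrec (n : nat) (f : list nat -> nat) : Prop :=
  exists e, mu_free e = true /\ forall v, length v = n -> eval e v (f v).

Definition uncurry1 (g : nat -> nat) (v : list nat) : nat := g (nth 0 v 0).
Definition uncurry2 (g : nat -> nat -> nat) (v : list nat) : nat :=
  g (nth 0 v 0) (nth 1 v 0).
Definition uncurry3 (g : nat -> nat -> nat -> nat) (v : list nat) : nat :=
  g (nth 0 v 0) (nth 1 v 0) (nth 2 v 0).
Definition uncurry4 (g : nat -> nat -> nat -> nat -> nat) (v : list nat) : nat :=
  g (nth 0 v 0) (nth 1 v 0) (nth 2 v 0) (nth 3 v 0).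

Lemma primrec_ext n f g : primrec n f -> (forall v, length v = n -> f v = g v) -> primrec n g.
Proof.
  intros [e [He H]] Hfg. exists e; split; auto. intros v Hv. rewrite <- Hfg; auto.
Qed.

Lemma primrec_proj n i : i < n -> primrec n (fun v => nth i v 0).
Proof.
  intros Hi. exists (RProj i); split; auto. intros v Hv. constructor.
  apply nth_error_nth'. lia.
Qed.

Ltac primrec_proj := apply primrec_proj; lia.

Lemma primrec_list n (fs : list (list nat -> nat)) : Forall (primrec n) fs ->
  exists es, forallb mu_free es = true /\
    forall v, length v = n -> evals es v (map (fun f => f v) fs).
Proof.
  induction 1 as [|f fs [e [He Hf]] _ [es [Hes Hs]]].
  - exists []; split; auto. intros; constructor.
  - exists (e :: es); split.
    + simpl; rewrite He, Hes; auto.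
    + intros v Hv; simpl; constructor; auto.
Qed.

Lemma primrec_comp n k g fs : primrec k g -> length fs = k -> Forall (primrec n) fs ->
  primrec n (fun v => g (map (fun f => f v) fs)).
Proof.
  intros [e [He H]] Hl Hf. destruct (primrec_list n fs Hf) as [es [Hes Hs]].
  exists (RComp e es); split.
  - rewrite mu_free_comp, He, Hes; auto.
  - intros v Hv. econstructor; [apply Hs; auto | apply H]. rewrite length_map; auto.
Qed.

Lemma primrec_comp1 n g f : primrec 1 (uncurry1 g) -> primrec n f ->
  primrec n (fun v => g (f v)).
Proof. intros Hg Hf. exact (primrec_comp n 1 (uncurry1 g) [f] Hg eq_refl ltac:(auto)). Qed.

Lemma primrec_comp2 n g f1 f2 : primrec 2 (uncurry2 g) -> primrec n f1 -> primrec n f2 ->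
  primrec n (fun v => g (f1 v) (f2 v)).
Proof. intros Hg H1 H2. exact (primrec_comp n 2 (uncurry2 g) [f1; f2] Hg eq_refl ltac:(auto)). Qed.

Lemma primrec_comp3 n g f1 f2 f3 : primrec 3 (uncurry3 g) ->
  primrec n f1 -> primrec n f2 -> primrec n f3 ->
  primrec n (fun v => g (f1 v) (f2 v) (f3 v)).
Proof.
  intros Hg H1 H2 H3. exact (primrec_comp n 3 (uncurry3 g) [f1; f2; f3] Hg eq_refl ltac:(auto)).
Qed.

Lemma primrec_succ n f : primrec n f -> primrec n (fun v => S (f v)).
Proof.
  intros Hf. apply (primrec_comp1 n S f); auto. exists RSucc; split; auto.
  intros [|x w] Hv; [discriminate | constructor].
Qed.

Lemma primrec_const n c : primrec n (fun _ => c).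
Proof.
  induction c as [|c IH]; [|apply primrec_succ; auto].
  exists RZero; split; auto. intros; constructor.
Qed.

Fixpoint rec_fun (f g : list nat -> nat) (x : nat) (w : list nat) : nat :=
  match x with 0 => f w | S k => g (k :: rec_fun f g k w :: w) end.

Lemma primrec_rec n f g : primrec n f -> primrec (S (S n)) g ->
  primrec (S n) (fun v => rec_fun f g (hd 0 v) (tl v)).
Proof.
  intros [e [He H]] [e2 [He2 H2]]. exists (RPrec e e2); split.
  - simpl; rewrite He, He2; auto.
  - intros [|x w] Hv; [discriminate|]. injection Hv as Hv. simpl.
    induction x; simpl; [constructor; auto|].
    econstructor; [apply IHx | apply H2]. simpl; lia.
Qed.

Lemma primrec_rec1 (c : nat) (g : nat -> nat -> nat) (h : nat -> nat) :
  primrec 2 (uncurry2 g) -> h 0 = c -> (forall x, h (S x) = g x (h x)) ->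
  primrec 1 (uncurry1 h).
Proof.
  intros Hg H0 HS. eapply primrec_ext.
  { apply (primrec_rec 0 (fun _ => c) (uncurry2 g)); auto. apply primrec_const. }
  intros [|x [|]] Hv; try discriminate. clear Hv. unfold uncurry1; simpl.
  induction x; simpl; auto. rewrite HS, IHx; reflexivity.
Qed.

Lemma primrec_rec2 (f : nat -> nat) (g : nat -> nat -> nat -> nat) (h : nat -> nat -> nat) :
  primrec 1 (uncurry1 f) -> primrec 3 (uncurry3 g) ->
  (forall y, h 0 y = f y) -> (forall x y, h (S x) y = g x (h x y) y) ->
  primrec 2 (uncurry2 h).
Proof.
  intros Hf Hg H0 HS. eapply primrec_ext; [apply (primrec_rec 1 (uncurry1 f) (uncurry3 g)); auto|].
  intros [|x [|y [|]]] Hv; try discriminate. clear Hv. unfold uncurry2; simpl.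
  induction x; simpl; [unfold uncurry1; simpl; auto|]. rewrite HS, IHx. reflexivity.
Qed.

Lemma primrec_rec3 (f : nat -> nat -> nat) (g : nat -> nat -> nat -> nat -> nat)
  (h : nat -> nat -> nat -> nat) :
  primrec 2 (uncurry2 f) -> primrec 4 (uncurry4 g) ->
  (forall y z, h 0 y z = f y z) -> (forall x y z, h (S x) y z = g x (h x y z) y z) ->
  primrec 3 (uncurry3 h).
Proof.
  intros Hf Hg H0 HS. eapply primrec_ext; [apply (primrec_rec 2 (uncurry2 f) (uncurry4 g)); auto|].
  intros [|x [|y [|z [|]]]] Hv; try discriminate. clear Hv. unfold uncurry3; simpl.
  induction x; simpl; [unfold uncurry2; simpl; auto|]. rewrite HS, IHx. reflexivity.
Qed.

Lemma add_primrec : primrec 2 (uncurry2 Nat.add).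
Proof.
  apply (primrec_rec2 (fun y => y) (fun _ r _ => S r)); auto.
  - primrec_proj.
  - apply (primrec_succ 3 (fun v => nth 1 v 0)); primrec_proj.
Qed.

Lemma pred_primrec : primrec 1 (uncurry1 pred).
Proof. apply (primrec_rec1 0 (fun x _ => x)); auto. primrec_proj. Qed.

Lemma sub_primrec : primrec 2 (uncurry2 Nat.sub).
Proof.
  assert (Hsubr : primrec 2 (uncurry2 (fun x y => y - x))).
  { apply (primrec_rec2 (fun y => y) (fun _ r _ => pred r)); try (intros; lia).
    - primrec_proj.
    - apply (primrec_comp1 3 pred); [apply pred_primrec | primrec_proj]. }
  apply (primrec_comp2 2 (fun x y => y - x)); [apply Hsubr | primrec_proj | primrec_proj].
Qed.

Lemma mul_primrec : primrec 2 (uncurry2 Nat.mul).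
Proof.
  apply (primrec_rec2 (fun _ => 0) (fun _ r y => y + r)); auto.
  - apply primrec_const.
  - apply (primrec_comp2 3 Nat.add); [apply add_primrec | primrec_proj | primrec_proj].
Qed.

Definition ifz (c a b : nat) : nat := match c with 0 => a | _ => b end.

Lemma ifz_primrec : primrec 3 (uncurry3 ifz).
Proof. apply (primrec_rec3 (fun a _ => a) (fun _ _ _ b => b)); auto; primrec_proj. Qed.

Lemma primrec_add n f g : primrec n f -> primrec n g -> primrec n (fun v => f v + g v).
Proof. intros; apply primrec_comp2; auto; apply add_primrec. Qed.
Lemma primrec_sub n f g : primrec n f -> primrec n g -> primrec n (fun v => f v - g v).
Proof. intros; apply primrec_comp2; auto; apply sub_primrec. Qed.
Lemma primrec_mul n f g : primrec n f -> primrec n g -> primrec n (fun v => f v * g v).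
Proof. intros; apply primrec_comp2; auto; apply mul_primrec. Qed.
Lemma primrec_pred n f : primrec n f -> primrec n (fun v => pred (f v)).
Proof. intros; apply primrec_comp1; auto; apply pred_primrec. Qed.
Lemma primrec_ifz n f g h : primrec n f -> primrec n g -> primrec n h ->
  primrec n (fun v => ifz (f v) (g v) (h v)).
Proof. intros; apply primrec_comp3; auto; apply ifz_primrec. Qed.

Fixpoint pow2 (k : nat) : nat := match k with 0 => 1 | S j => pow2 j + pow2 j end.

Lemma pow2_eq k : pow2 k = 2 ^ k.
Proof. induction k; simpl; lia. Qed.

Lemma primrec_pow2 n f : primrec n f -> primrec n (fun v => pow2 (f v)).
Proof.
  intros; apply primrec_comp1; auto.
  apply (primrec_rec1 1 (fun _ r => r + r)); auto. apply primrec_add; primrec_proj.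
Qed.

(** * Decoding pairs and words *)

Fixpoint tri (s : nat) : nat := match s with 0 => 0 | S k => tri k + S k end.

Lemma tri_eq s : tri s = s * (s + 1) / 2.
Proof.
  induction s as [|s IH]; [reflexivity|]. simpl tri. rewrite IH.
  replace (S s * (S s + 1)) with (s * (s + 1) + S s * 2) by nia.
  rewrite Nat.div_add by lia. lia.
Qed.

Lemma tri_mono a b : a <= b -> tri a <= tri b.
Proof. induction 1; simpl; lia. Qed.

Lemma cpair_tri a b : cpair a b = tri (a + b) + b.
Proof. unfold cpair. rewrite tri_eq. reflexivity. Qed.

Lemma primrec_tri n f : primrec n f -> primrec n (fun v => tri (f v)).
Proof.
  intros; apply primrec_comp1; auto.
  apply (primrec_rec1 0 (fun x r => r + S x)); auto.
  apply primrec_add; [|apply primrec_succ]; primrec_proj.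
Qed.

Lemma primrec_cpair n f g : primrec n f -> primrec n g -> primrec n (fun v => cpair (f v) (g v)).
Proof.
  intros Hf Hg. eapply primrec_ext.
  - apply primrec_add; [apply primrec_tri, primrec_add|]; [exact Hf | exact Hg | exact Hg].
  - intros v _. rewrite cpair_tri. reflexivity.
Qed.

Fixpoint tri_root (c : nat) : nat :=
  match c with
  | 0 => 0
  | S x => ifz (tri (S (tri_root x)) - S x) (S (tri_root x)) (tri_root x)
  end.

Lemma tri_root_spec c : tri (tri_root c) <= c < tri (S (tri_root c)).
Proof.
  induction c; [simpl; lia|]. simpl tri_root. simpl tri in *.
  destruct (tri (tri_root c) + S (tri_root c) - S c) eqn:Heq; simpl ifz; simpl tri; lia.
Qed.

Lemma tri_root_unique c s : tri s <= c < tri (S s) -> tri_root c = s.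
Proof.
  intros H. pose proof (tri_root_spec c).
  destruct (Nat.lt_trichotomy (tri_root c) s) as [L|[L|L]]; auto.
  - pose proof (tri_mono (S (tri_root c)) s L). lia.
  - pose proof (tri_mono (S s) (tri_root c) L). lia.
Qed.

Lemma primrec_tri_root n f : primrec n f -> primrec n (fun v => tri_root (f v)).
Proof.
  intros; apply primrec_comp1; auto.
  apply (primrec_rec1 0 (fun x r => ifz (tri (S r) - S x) (S r) r)); auto.
  apply primrec_ifz; [apply primrec_sub; [apply primrec_tri|]|..];
    try apply primrec_succ; primrec_proj.
Qed.

Definition unpair_snd (c : nat) : nat := c - tri (tri_root c).
Definition unpair_fst (c : nat) : nat := tri_root c - unpair_snd c.

Lemma unpair_cpair a b : unpair_fst (cpair a b) = a /\ unpair_snd (cpair a b) = b.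
Proof.
  rewrite cpair_tri. assert (H : tri_root (tri (a + b) + b) = a + b).
  { apply tri_root_unique. simpl tri. lia. }
  unfold unpair_fst, unpair_snd. rewrite H. lia.
Qed.

Lemma cpair_unpair c : cpair (unpair_fst c) (unpair_snd c) = c.
Proof.
  pose proof (tri_root_spec c). simpl tri in H. rewrite cpair_tri.
  unfold unpair_fst, unpair_snd.
  replace (tri_root c - (c - tri (tri_root c)) + (c - tri (tri_root c))) with (tri_root c) by lia.
  lia.
Qed.

Lemma cpair_inj a b a' b' : cpair a b = cpair a' b' -> a = a' /\ b = b'.
Proof.
  intros H. pose proof (unpair_cpair a b) as [Ha Hb].
  rewrite H in Ha, Hb. destruct (unpair_cpair a' b'). split; congruence.
Qed.

Lemma primrec_unpair_snd n f : primrec n f -> primrec n (fun v => unpair_snd (f v)).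
Proof. intros. apply primrec_sub, primrec_tri, primrec_tri_root; auto. Qed.

Lemma primrec_unpair_fst n f : primrec n f -> primrec n (fun v => unpair_fst (f v)).
Proof. intros. apply primrec_sub; [apply primrec_tri_root | apply primrec_unpair_snd]; auto. Qed.

Definition code_tl (c : nat) : nat := unpair_snd (pred c).
Fixpoint code_drop (j c : nat) : nat := match j with 0 => c | S k => code_tl (code_drop k c) end.
Definition code_nth (c j : nat) : nat := unpair_fst (pred (code_drop j c)).
Fixpoint code_len_upto (j c : nat) : nat :=
  match j with 0 => 0 | S k => code_len_upto k c + ifz (code_drop k c) 0 1 end.
(* A word never has more letters than its code, so [c] bounds the scan. *)
Definition code_len (c : nat) : nat := code_len_upto c c.

Lemma code_drop_lcode j l : code_drop j (lcode l) = lcode (skipn j l).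
Proof.
  induction j as [|j IH]; simpl; auto. rewrite IH. clear IH. revert l.
  induction j; intros [|x t]; simpl; auto. apply unpair_cpair.
Qed.

Lemma code_nth_lcode l j : code_nth (lcode l) j = nth j l 0.
Proof.
  unfold code_nth. rewrite code_drop_lcode.
  revert l; induction j; intros [|x t]; simpl; auto. apply unpair_cpair.
Qed.

Lemma length_le_lcode l : length l <= lcode l.
Proof. induction l; simpl; auto. rewrite cpair_tri. lia. Qed.

Lemma code_len_lcode l : code_len (lcode l) = length l.
Proof.
  assert (Hupto : forall j, code_len_upto j (lcode l) = min j (length l)).
  { induction j as [|j IH]; [reflexivity|]. cbn [code_len_upto]. rewrite IH, code_drop_lcode.
    destruct (le_lt_dec (length l) j).
    - rewrite skipn_all2 by lia. cbn [lcode ifz]. lia.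
    - destruct (skipn j l) eqn:E; cbn [lcode ifz]; [|lia].
      apply (f_equal (@length nat)) in E. rewrite length_skipn in E. simpl in E. lia. }
  unfold code_len. rewrite Hupto. pose proof (length_le_lcode l). lia.
Qed.

Lemma lcode_inj l l' : lcode l = lcode l' -> l = l'.
Proof.
  revert l'; induction l; intros [|x t] H; simpl in H; try discriminate; auto.
  injection H as H. apply cpair_inj in H as [H1 H2]. subst. f_equal; auto.
Qed.

Lemma primrec_code_nth n f g : primrec n f -> primrec n g ->
  primrec n (fun v => code_nth (f v) (g v)).
Proof.
  intros Hf Hg. unfold code_nth. apply primrec_unpair_fst, primrec_pred.
  apply (primrec_comp2 n code_drop g f); auto.
  apply (primrec_rec2 (fun y => y) (fun _ r _ => code_tl r)); auto.
  - primrec_proj.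
  - apply primrec_unpair_snd, primrec_pred. primrec_proj.
Qed.

Lemma primrec_code_len n f : primrec n f -> primrec n (fun v => code_len (f v)).
Proof.
  intros Hf. unfold code_len. apply primrec_comp2; auto.
  apply (primrec_rec2 (fun _ => 0) (fun k r c => r + ifz (code_drop k c) 0 1)); auto.
  - apply primrec_const.
  - apply primrec_add; [primrec_proj|]. apply primrec_ifz; try apply primrec_const.
    apply (primrec_comp2 3 code_drop); try primrec_proj.
    apply (primrec_rec2 (fun y => y) (fun _ r _ => code_tl r)); auto.
    + primrec_proj.
    + apply primrec_unpair_snd, primrec_pred. primrec_proj.
Qed.

Lemma code_nth_pre (p : baire) m j : j < m -> code_nth (lcode (pre p m)) j = p j.
Proof.
  intros H. rewrite code_nth_lcode. unfold pre.
  rewrite nth_indep with (d' := p 0) by (rewrite length_map, length_seq; auto).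
  rewrite map_nth, seq_nth; auto.
Qed.

Lemma pre_S (q : baire) k : pre q (S k) = pre q k ++ [q k].
Proof. unfold pre. rewrite seq_S, map_app. reflexivity. Qed.

Lemma length_pre (p : baire) m : length (pre p m) = m.
Proof. unfold pre. rewrite length_map, length_seq. reflexivity. Qed.

(** * Computable total maps *)

Fixpoint code_map (F : nat -> nat -> nat) (n c k : nat) : nat :=
  match n with 0 => 0 | S j => S (cpair (F c (k - S j)) (code_map F j c k)) end.

Lemma code_map_eq F n c k : n <= k -> code_map F n c k = lcode (map (F c) (seq (k - n) n)).
Proof.
  induction n; intros H; simpl; auto. rewrite IHn by lia.
  replace (k - n) with (S (k - S n)) by lia. reflexivity.
Qed.

Lemma primrec_code_map F : primrec 2 (uncurry2 F) -> primrec 3 (uncurry3 (code_map F)).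
Proof.
  intros HF. apply (primrec_rec3 (fun _ _ => 0) (fun j r c k => S (cpair (F c (k - S j)) r))); auto.
  - apply primrec_const.
  - apply primrec_succ, primrec_cpair; [|primrec_proj].
    apply primrec_comp2; auto; [primrec_proj|].
    apply primrec_sub; [|apply primrec_succ]; primrec_proj.
Qed.

(* On a prefix of length [m] the machine writes the first [m - L] letters of the
   output, so [F] may consult the input up to [L] positions beyond the letter. *)
Lemma computes_of_primrec_prefix (L : nat) (F : nat -> nat -> nat) :
  primrec 2 (uncurry2 F) ->
  exists e, forall p q, (forall m i, i + L < m -> F (lcode (pre p m)) i = q i) -> computes e p q.
Proof.
  intros HF.
  set (out := fun c => code_map F (code_len c - L) c (code_len c - L)).
  assert (Hout_pr : primrec 1 (uncurry1 out)).
  { unfold out. apply primrec_comp3; [apply primrec_code_map; auto | | primrec_proj |];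
      apply primrec_sub; try apply primrec_const; apply primrec_code_len; primrec_proj. }
  destruct Hout_pr as [e [He Hout_e]]. exists e. intros p q Hq.
  assert (Hout : forall m, out (lcode (pre p m)) = lcode (pre q (m - L))).
  { intros m. unfold out. rewrite code_len_lcode, length_pre, code_map_eq by lia.
    replace (m - L - (m - L)) with 0 by lia. f_equal.
    apply map_ext_in. intros i Hi. apply in_seq in Hi. apply Hq. lia. }
  assert (Hw : forall m, wout e p m (pre q (m - L))).
  { intros m. unfold wout. rewrite <- Hout. apply (Hout_e [_]). reflexivity. }
  assert (Hw_eq : forall m w, wout e p m w -> w = pre q (m - L)).
  { intros m w H. apply lcode_inj. exact (eval_det _ _ _ H He _ (Hw m)). }
  split; [|split].
  - intros m. eexists; apply Hw.
  - intros m w w' H1 H2. apply Hw_eq in H1, H2. subst.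
    destruct (le_lt_dec L m).
    + replace (S m - L) with (S (m - L)) by lia. rewrite pre_S. eauto.
    + replace (S m - L) with 0 by lia. replace (m - L) with 0 by lia. exists []. reflexivity.
  - intros n. exists (S n + L), (pre q (S n)). split.
    + replace (S n) with (S n + L - L) at 2 by lia. apply Hw.
    + unfold pre. rewrite nth_error_map, nth_error_seq.
      destruct (Nat.ltb_spec n (S n)); [reflexivity | lia].
Qed.

Lemma computable_of_primrec_prefix (L : nat) (F : nat -> nat -> nat) (Q : baire -> baire) :
  primrec 2 (uncurry2 F) -> (forall p m i, i + L < m -> F (lcode (pre p m)) i = Q p i) ->
  computable (fun p => Some (Q p)).
Proof.
  intros HF HQ. destruct (computes_of_primrec_prefix L F HF) as [e He]. exists e.
  intros p q H. injection H as <-. apply He, HQ.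
Qed.

Lemma sW_le_of_total {X Y U V : rep_space} (f : problem X Y) (g : problem U V)
  (K H : baire -> baire) :
  computable (fun p => Some (K p)) -> computable (fun r => Some (H r)) ->
  (forall p x, delta X p x -> (exists y, f x y) ->
     exists u, delta U (K p) u /\ (exists v, g u v) /\
       forall r v, delta V r v -> g u v -> exists y, delta Y (H r) y /\ f x y) ->
  sW_le f g.
Proof.
  intros HK HH Htransfer. exists (fun r => Some (H r)), (fun p => Some (K p)).
  split; [exact HH | split; [exact HK|]].
  intros G HG p x Hpx Hdom. destruct (Htransfer p x Hpx Hdom) as (u & Hu & Hgu & Hback).
  destruct (HG (K p) u Hu Hgu) as (r & Hr & v & Hrv & Huv).
  unfold pcomp. rewrite Hr. exists (H r). split; [reflexivity | exact (Hback r v Hrv Huv)].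
Qed.

(** * The four translations of names *)

Fixpoint zero_count (a : baire) (i : nat) : nat :=
  match i with 0 => 0 | S k => zero_count a k + ifz (a k) 1 0 end.

Lemma zero_count_ext a b i : (forall j, j < i -> a j = b j) -> zero_count a i = zero_count b i.
Proof. induction i; intros H; simpl; auto. rewrite IHi, H; auto. Qed.

Lemma primrec_zero_count n f g : primrec n f -> primrec n g ->
  primrec n (fun v => zero_count (code_nth (f v)) (g v)).
Proof.
  intros Hf Hg. apply (primrec_comp2 n (fun i c => zero_count (code_nth c) i) g f); auto.
  apply (primrec_rec2 (fun _ => 0) (fun i r c => r + ifz (code_nth c i) 1 0)); auto.
  - apply primrec_const.
  - apply primrec_add; [primrec_proj|].
    apply primrec_ifz; try apply primrec_const. apply primrec_code_nth; primrec_proj.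
Qed.

(* A ball isolating [- half_pow k] in omega+1: its radius [1 / (2^(k+1) + 1)] is
   below [half_pow (k + 1)], the distance to the neighbouring points. *)
Definition ball_code (k : nat) : nat := cpair (S k) (cpair 1 (pow2 (S k))).

Definition sort_to_closed (p : baire) : baire :=
  fun i => ifz (p i) (S (ball_code (zero_count p i))) 0.

Lemma sort_to_closed_computable : computable (fun p => Some (sort_to_closed p)).
Proof.
  apply (computable_of_primrec_prefix 0
    (fun c i => ifz (code_nth c i) (S (ball_code (zero_count (code_nth c) i))) 0)).
  - apply primrec_ifz; [apply primrec_code_nth; primrec_proj | | apply primrec_const].
    apply primrec_succ, primrec_cpair; [apply primrec_succ, primrec_zero_count; primrec_proj|].
    apply primrec_cpair; [apply primrec_const|].
    apply primrec_pow2, primrec_succ, primrec_zero_count; primrec_proj.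
  - intros p m i Hi. unfold sort_to_closed. rewrite code_nth_pre by lia.
    rewrite (zero_count_ext _ p) by (intros; apply code_nth_pre; lia). reflexivity.
Qed.

Definition cauchy_to_sort (r : baire) : baire :=
  fun i => ifz (r (i + 2)) 0 (ifz (r (i + 2) - S i) 1 0).

Lemma cauchy_to_sort_computable : computable (fun r => Some (cauchy_to_sort r)).
Proof.
  apply (computable_of_primrec_prefix 2
    (fun c i => ifz (code_nth c (i + 2)) 0 (ifz (code_nth c (i + 2) - S i) 1 0))).
  - assert (Hr : primrec 2 (fun v => code_nth (nth 0 v 0) (nth 1 v 0 + 2))).
    { apply primrec_code_nth; [|apply primrec_add; [|apply primrec_const]]; primrec_proj. }
    apply primrec_ifz; auto; try apply primrec_const.
    apply primrec_ifz; try apply primrec_const.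
    apply primrec_sub; auto. apply primrec_succ; primrec_proj.
  - intros p m i Hi. unfold cauchy_to_sort. rewrite code_nth_pre by lia. reflexivity.
Qed.

Definition nat_lt_flag (x y : nat) : nat := ifz (y - x) 0 1.
Definition nat_dist (x y : nat) : nat := (x - y) + (y - x).

(* [|- half_pow k - nu a| < m / (d + 1)] with the denominators [(d + 1) * 2^k]
   resp. [(d + 1) * 2^(a - 1 + k)] cleared, a comparison of naturals. *)
Definition ball_contains (c k : nat) : nat :=
  let a := unpair_fst c in
  let m := unpair_fst (unpair_snd c) in
  let d := unpair_snd (unpair_snd c) in
  ifz a (nat_lt_flag (S d) (m * pow2 k))
        (nat_lt_flag (nat_dist (pow2 k) (pow2 (a - 1)) * S d) (m * pow2 (a - 1 + k))).

Lemma primrec_ball_contains n f g : primrec n f -> primrec n g ->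
  primrec n (fun v => ball_contains (f v) (g v)).
Proof.
  intros Hf Hg. unfold ball_contains, nat_lt_flag, nat_dist.
  assert (Ha : primrec n (fun v => unpair_fst (f v) - 1)).
  { apply primrec_sub; [apply primrec_unpair_fst; auto | apply primrec_const]. }
  assert (Hm : primrec n (fun v => unpair_fst (unpair_snd (f v)))).
  { apply primrec_unpair_fst, primrec_unpair_snd; auto. }
  assert (Hd : primrec n (fun v => S (unpair_snd (unpair_snd (f v))))).
  { apply primrec_succ, primrec_unpair_snd, primrec_unpair_snd; auto. }
  apply primrec_ifz; [apply primrec_unpair_fst; auto| |];
    apply primrec_ifz; try apply primrec_const; apply primrec_sub.
  - apply primrec_mul; [exact Hm | apply primrec_pow2; exact Hg].
  - exact Hd.
  - apply primrec_mul; [exact Hm | apply primrec_pow2, primrec_add; [exact Ha | exact Hg]].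
  - apply primrec_mul; [|exact Hd].
    apply primrec_add; apply primrec_sub; apply primrec_pow2; auto.
Qed.

Definition removes (p : baire) (j k : nat) : nat := ifz (p j) 0 (ball_contains (p j - 1) k).

Fixpoint removed_before (p : baire) (n k : nat) : nat :=
  match n with 0 => 0 | S j => ifz (removed_before p j k) (removes p j k) 1 end.

(* [level p i] is the index [L] of the current candidate [- half_pow L] for the
   minimum; it advances once one of the first [i + 1] enumerated balls covers it. *)
Fixpoint level (p : baire) (i : nat) : nat :=
  match i with 0 => 0 | S j => level p j + removed_before p (S j) (level p j) end.

Definition closed_to_sort (p : baire) : baire :=
  fun i => ifz (removed_before p (S i) (level p i)) 1 0.

Lemma removed_before_ext a b n k :
  (forall j, j < n -> a j = b j) -> removed_before a n k = removed_before b n k.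
Proof.
  induction n; intros H; simpl; auto. rewrite IHn by auto. unfold removes. rewrite H; auto.
Qed.

Lemma level_ext a b i : (forall j, j < i -> a j = b j) -> level a i = level b i.
Proof.
  induction i; intros H; [reflexivity|]. cbn [level]. rewrite IHi by auto.
  rewrite (removed_before_ext a b (S i)); auto.
Qed.

Lemma primrec_removed_before n f g h : primrec n f -> primrec n g -> primrec n h ->
  primrec n (fun v => removed_before (code_nth (f v)) (g v) (h v)).
Proof.
  intros Hf Hg Hh.
  apply (primrec_comp3 n (fun n c k => removed_before (code_nth c) n k)); auto.
  apply (primrec_rec3 (fun _ _ => 0)
    (fun j r c k => ifz r (removes (code_nth c) j k) 1)); auto.
  - apply primrec_const.
  - apply primrec_ifz; [primrec_proj | | apply primrec_const]. unfold removes.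
    apply primrec_ifz; [apply primrec_code_nth; primrec_proj | apply primrec_const |].
    apply primrec_ball_contains; [|primrec_proj].
    apply primrec_sub; [apply primrec_code_nth; primrec_proj | apply primrec_const].
Qed.

Lemma primrec_level n f g : primrec n f -> primrec n g ->
  primrec n (fun v => level (code_nth (f v)) (g v)).
Proof.
  intros Hf Hg. apply (primrec_comp2 n (fun i c => level (code_nth c) i) g f); auto.
  apply (primrec_rec2 (fun _ => 0) (fun j r c => r + removed_before (code_nth c) (S j) r)); auto.
  - apply primrec_const.
  - apply primrec_add; [primrec_proj|].
    apply primrec_removed_before; [| apply primrec_succ |]; primrec_proj.
Qed.

Lemma closed_to_sort_computable : computable (fun p => Some (closed_to_sort p)).
Proof.
  apply (computable_of_primrec_prefix 0
    (fun c i => ifz (removed_before (code_nth c) (S i) (level (code_nth c) i)) 1 0)).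
  - apply primrec_ifz; try apply primrec_const.
    apply primrec_removed_before; [| apply primrec_succ | apply primrec_level]; primrec_proj.
  - intros p m i Hi. unfold closed_to_sort.
    rewrite (level_ext _ p), (removed_before_ext _ p); auto;
      intros; apply code_nth_pre; lia.
Qed.

Definition sort_to_cauchy (s : baire) : baire := fun i => S (zero_count s i).

Lemma sort_to_cauchy_computable : computable (fun s => Some (sort_to_cauchy s)).
Proof.
  apply (computable_of_primrec_prefix 0 (fun c i => S (zero_count (code_nth c) i))).
  - apply primrec_succ, primrec_zero_count; primrec_proj.
  - intros p m i Hi. unfold sort_to_cauchy. f_equal.
    apply zero_count_ext. intros; apply code_nth_pre; lia.
Qed.

(** * The points of omega+1 *)

Open Scope R_scope.

Definition half_pow (k : nat) : R := (/2) ^ k.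

Lemma half_pow_pos k : 0 < half_pow k.
Proof. apply pow_lt. lra. Qed.

Lemma half_pow_S k : half_pow (S k) = half_pow k / 2.
Proof. unfold half_pow. simpl. lra. Qed.

Lemma half_pow_le a b : (a <= b)%nat -> half_pow b <= half_pow a.
Proof.
  induction 1 as [|b _ IH]; [lra|]. rewrite half_pow_S. pose proof (half_pow_pos b). lra.
Qed.

Lemma half_pow_le_half a b : (a < b)%nat -> half_pow b <= half_pow a / 2.
Proof. intros H. rewrite <- half_pow_S. apply half_pow_le. lia. Qed.

Lemma half_pow_lt a b : (a < b)%nat -> half_pow b < half_pow a.
Proof. intros H. pose proof (half_pow_le_half a b H). pose proof (half_pow_pos a). lra. Qed.

Lemma half_pow_inj a b : half_pow a = half_pow b -> a = b.
Proof.
  intros H. destruct (Nat.lt_trichotomy a b) as [L|[L|L]]; auto;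
    apply half_pow_lt in L; lra.
Qed.

Lemma half_pow_inv k : half_pow k = / 2 ^ k.
Proof. apply pow_inv. Qed.

Lemma INR_pow2 k : INR (pow2 k) = 2 ^ k.
Proof. rewrite pow2_eq, pow_INR. reflexivity. Qed.

Lemma in_omega1_half_pow k : in_omega1 (- half_pow k).
Proof. right. exists k. reflexivity. Qed.

(* Approximations to within [half_pow (i + 2)] decide [a <= i], because distinct
   points of the form [half_pow a] with [a <= i] are [half_pow (i + 1)] apart. *)
Lemma half_pow_close_le a b i :
  Rabs (half_pow a - half_pow b) <= half_pow (S (S i)) -> (a <= i)%nat -> (b <= i)%nat.
Proof.
  intros Hab Ha. destruct (le_lt_dec b i) as [|Hb]; [assumption | exfalso].
  pose proof (half_pow_le_half a b ltac:(lia)). pose proof (half_pow_pos b).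
  pose proof (half_pow_lt (S a) (S (S i)) ltac:(lia)). rewrite (half_pow_S a) in H1.
  rewrite Rabs_pos_eq in Hab by lra. lra.
Qed.

Lemma half_pow_close_iff a b i :
  Rabs (half_pow a - half_pow b) <= half_pow (S (S i)) -> ((a <= i)%nat <-> (b <= i)%nat).
Proof.
  intros H. split; apply half_pow_close_le; [|rewrite Rabs_minus_sym]; exact H.
Qed.

Lemma half_pow_small a i : half_pow a <= half_pow (S (S i)) -> (i < a)%nat.
Proof.
  intros H. destruct (le_lt_dec a i) as [Ha|]; [exfalso|lia].
  pose proof (half_pow_lt a (S (S i)) ltac:(lia)). lra.
Qed.

Lemma half_pow_dist_le a b i :
  (a = b \/ (i <= a /\ i <= b))%nat -> Rabs (- half_pow a - - half_pow b) <= half_pow i.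
Proof.
  intros [-> | [Ha Hb]].
  - replace (- half_pow b - - half_pow b) with 0 by ring. rewrite Rabs_R0.
    apply Rlt_le, half_pow_pos.
  - apply half_pow_le in Ha, Hb. pose proof (half_pow_pos a). pose proof (half_pow_pos b).
    unfold Rabs; destruct Rcase_abs; lra.
Qed.

Lemma omega1_isolated x k :
  in_omega1 x -> Rabs (x + half_pow k) < half_pow (S k) -> x = - half_pow k.
Proof.
  intros [-> | [j ->]] Hlt; pose proof (half_pow_S k); pose proof (half_pow_pos k).
  - rewrite Rplus_0_l, Rabs_pos_eq in Hlt by lra. lra.
  - change ((/2) ^ j) with (half_pow j) in *.
    pose proof (Rle_abs (- half_pow j + half_pow k)).
    pose proof (Rle_abs (- (- half_pow j + half_pow k))). rewrite Rabs_Ropp in H2.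
    destruct (Nat.lt_trichotomy j k) as [L|[->|L]]; auto; apply half_pow_le_half in L;
      pose proof (half_pow_pos j); lra.
Qed.

Lemma cauchy_name_approx r y : delta omega1 r y -> forall i, Rabs (nu (r i) - y) <= half_pow i.
Proof.
  intros [Hc Hl] i. apply Rnot_lt_le. intros Hlt.
  destruct (Hl (Rabs (nu (r i) - y) - half_pow i)) as [N HN]; [lra|].
  specialize (HN (max N i) ltac:(lia)). unfold R_dist in HN.
  specialize (Hc i (max N i) ltac:(lia)).
  pose proof (Rabs_triang (nu (r i) - nu (r (max N i))) (nu (r (max N i)) - y)).
  replace (nu (r i) - nu (r (max N i)) + (nu (r (max N i)) - y)) with (nu (r i) - y) in H by ring.
  unfold half_pow in *. lra.
Qed.

Lemma in_ball_ball_code k x : in_ball (ball_code k) x <-> in_omega1 x /\ x = - half_pow k.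
Proof.
  split.
  - intros (a & m & d & Heq & Hx & Hlt). unfold ball_code in Heq.
    apply cpair_inj in Heq as [<- Heq]. apply cpair_inj in Heq as [<- <-].
    split; auto. apply omega1_isolated; auto.
    change (nu (S k)) with (- half_pow k) in Hlt.
    replace (x - - half_pow k) with (x + half_pow k) in Hlt by ring.
    eapply Rlt_le_trans; [exact Hlt|].
    rewrite (S_INR (pow2 (S k))), INR_pow2, half_pow_inv. simpl (INR 1).
    pose proof (pow_lt 2 (S k) ltac:(lra)). unfold Rdiv. rewrite Rmult_1_l.
    apply Rlt_le, Rinv_lt_contravar; nra.
  - intros [Hx ->]. exists (S k), 1%nat, (pow2 (S k)). split; [reflexivity|]. split; auto.
    change (nu (S k)) with (- half_pow k).
    replace (- half_pow k - - half_pow k) with 0 by ring. rewrite Rabs_R0.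
    apply Rdiv_lt_0_compat; [simpl; lra | apply lt_0_INR; lia].
Qed.

Lemma Rdiv_lt_cross X A Y B : 0 < A -> 0 < B -> (X / A < Y / B <-> X * B < Y * A).
Proof.
  intros HA HB. split; intros H.
  - replace (X * B) with ((X / A) * (A * B)) by (field; lra).
    replace (Y * A) with ((Y / B) * (A * B)) by (field; lra).
    apply Rmult_lt_compat_r; nra.
  - replace (X / A) with ((X * B) / (A * B)) by (field; lra).
    replace (Y / B) with ((Y * A) / (A * B)) by (field; lra).
    apply Rmult_lt_compat_r; [apply Rinv_0_lt_compat; nra | exact H].
Qed.

Lemma INR_nat_dist x y : INR (nat_dist x y) = Rabs (INR x - INR y).
Proof.
  unfold nat_dist. destruct (le_lt_dec x y) as [L|L].
  - replace (x - y)%nat with 0%nat by lia. rewrite Nat.add_0_l, minus_INR by lia.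
    rewrite Rabs_minus_sym, Rabs_pos_eq; auto. apply le_INR in L. lra.
  - replace (y - x)%nat with 0%nat by lia. rewrite Nat.add_0_r, minus_INR by lia.
    rewrite Rabs_pos_eq; auto. apply lt_INR in L. lra.
Qed.

Lemma nat_lt_flag_iff x y (P : Prop) :
  (P <-> (x < y)%nat) -> (nat_lt_flag x y = 1%nat /\ P) \/ (nat_lt_flag x y = 0%nat /\ ~ P).
Proof.
  intros HP. rewrite HP. unfold nat_lt_flag.
  destruct (y - x)%nat eqn:E; simpl; [right|left]; split; lia.
Qed.

Lemma ball_contains_spec c k :
  (ball_contains c k = 1%nat /\ in_ball c (- half_pow k)) \/
  (ball_contains c k = 0%nat /\ ~ in_ball c (- half_pow k)).
Proof.
  set (a := unpair_fst c). set (m := unpair_fst (unpair_snd c)).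
  set (d := unpair_snd (unpair_snd c)).
  assert (Hc : c = cpair a (cpair m d)) by (unfold a, m, d; rewrite !cpair_unpair; auto).
  assert (Hball : in_ball c (- half_pow k) <-> Rabs (- half_pow k - nu a) < INR m / INR (S d)).
  { split.
    - intros (a' & m' & d' & Heq & _ & Hlt). rewrite Hc in Heq.
      apply cpair_inj in Heq as [<- Heq]. apply cpair_inj in Heq as [<- <-]. exact Hlt.
    - intros H. exists a, m, d. repeat split; auto. apply in_omega1_half_pow. }
  assert (HD : 0 < INR (S d)) by (apply lt_0_INR; lia).
  pose proof (pow_lt 2 k ltac:(lra)) as Hk.
  unfold ball_contains. fold a m d. destruct a as [|j]; simpl ifz; apply nat_lt_flag_iff;
    rewrite Hball.
  - change (nu 0) with 0. rewrite Rminus_0_r, Rabs_Ropp, Rabs_pos_eq by apply Rlt_le, half_pow_pos.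
    rewrite half_pow_inv, <- (Rmult_1_l (/ 2 ^ k)). fold (Rdiv 1 (2 ^ k)).
    rewrite Rdiv_lt_cross by auto. rewrite <- INR_pow2, <- mult_INR.
    split; [intros; apply INR_lt; simpl (INR 1); lra | intros L; apply lt_INR in L; lra].
  - rewrite Nat.sub_0_r. change (nu (S j)) with (- half_pow j). rewrite !half_pow_inv.
    pose proof (pow_lt 2 j ltac:(lra)) as Hj.
    replace (- / 2 ^ k - - / 2 ^ j) with ((2 ^ k - 2 ^ j) / (2 ^ j * 2 ^ k))
      by (field; split; lra).
    unfold Rdiv at 1. rewrite Rabs_mult, (Rabs_pos_eq (/ _))
      by (apply Rlt_le, Rinv_0_lt_compat; nra).
    fold (Rdiv (Rabs (2 ^ k - 2 ^ j)) (2 ^ j * 2 ^ k)).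
    rewrite Rdiv_lt_cross by (auto; nra).
    split; intros L; [apply INR_lt | apply lt_INR in L];
      rewrite !mult_INR, INR_nat_dist, !INR_pow2, pow_add in *; lra.
Qed.

(** * Sort reduces to the minimum *)

Lemma zeros_upto_zero_count p b : delta cantor p b -> forall m, zeros_upto b m = zero_count p m.
Proof.
  intros Hpb m. induction m as [|m IH]; simpl; auto. rewrite IH.
  destruct (Hpb m) as [[-> ->]|[-> ->]]; reflexivity.
Qed.

Lemma zero_count_mono p i j : (i <= j)%nat -> (zero_count p i <= zero_count p j)%nat.
Proof. induction 1; auto. simpl. lia. Qed.

Lemma zero_count_hit p i k :
  (k < zero_count p i)%nat -> exists j, (j < i)%nat /\ p j = 0%nat /\ zero_count p j = k.
Proof.
  induction i as [|i IH]; simpl; intros H; [lia|].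
  destruct (p i) eqn:Hp; simpl in H.
  - destruct (Nat.eq_dec k (zero_count p i)) as [->|]; [exists i; auto|].
    destruct IH as [j Hj]; [lia|]. exists j; intuition lia.
  - destruct IH as [j Hj]; [lia|]. exists j; intuition lia.
Qed.

Lemma exactly_zeros_zero_count p b n : delta cantor p b -> exactly_zeros b n ->
  (forall i, (zero_count p i <= n)%nat) /\ exists M, zero_count p M = n.
Proof.
  intros Hpb [M HM]. pose proof (zeros_upto_zero_count p b Hpb) as Hz. split.
  - intros i. rewrite <- (HM (max i M)), Hz by lia. apply zero_count_mono; lia.
  - exists M. rewrite <- Hz. apply HM; lia.
Qed.

Lemma inf_zeros_zero_count p b : delta cantor p b -> inf_zeros b ->
  forall k, exists i, (k <= zero_count p i)%nat.
Proof.
  intros Hpb Hinf k. induction k as [|k [i Hi]]; [exists 0%nat; lia|].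
  destruct (Hinf i) as [j [Hj Hb]]. exists (S j). simpl.
  destruct (Hpb j) as [[-> _]|[_ Hb']]; [|congruence].
  pose proof (zero_count_mono p i j Hj). simpl. lia.
Qed.

Definition sort_closed_set (p : baire) (x : R) : Prop :=
  in_omega1 x /\ ~ exists i, p i = 0%nat /\ x = - half_pow (zero_count p i).

Lemma sort_to_closed_spec p : delta closed_omega1 (sort_to_closed p) (sort_closed_set p).
Proof.
  intros x. cbn. unfold sort_closed_set. split; intros [Hx Hn]; split; auto.
  - intros (i & c & Hi & Hb). apply Hn. unfold sort_to_closed in Hi.
    destruct (p i) eqn:Hp; [|discriminate]. injection Hi as <-.
    apply in_ball_ball_code in Hb. exists i; tauto.
  - intros (i & Hi & ->). apply Hn. exists i, (ball_code (zero_count p i)).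
    unfold sort_to_closed. rewrite Hi. split; [reflexivity|].
    apply in_ball_ball_code; auto.
Qed.

Lemma min_omega1_unique A y y' : min_omega1 A y -> min_omega1 A y' -> y = y'.
Proof. intros [Hy Hmin] [Hy' Hmin']. apply Rle_antisym; auto. Qed.

Lemma sort_closed_set_min_finite p n :
  (forall i, (zero_count p i <= n)%nat) -> (exists M, zero_count p M = n) ->
  min_omega1 (sort_closed_set p) (- half_pow n).
Proof.
  intros Hle [M HM]. split; [split|].
  - apply in_omega1_half_pow.
  - intros (i & Hi & He). specialize (Hle (S i)). simpl in Hle. rewrite Hi in Hle.
    apply Ropp_eq_compat in He. rewrite !Ropp_involutive in He.
    apply half_pow_inj in He. simpl in Hle. lia.
  - intros z [[-> | [j ->]] Hn]; [pose proof (half_pow_pos n); lra|].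
    change ((/2) ^ j) with (half_pow j). destruct (le_lt_dec n j) as [L|L].
    + apply half_pow_le in L. lra.
    + exfalso. apply Hn. rewrite <- HM in L.
      destruct (zero_count_hit p M j L) as (i & _ & Hi & Hzi). exists i. rewrite Hzi. auto.
Qed.

Lemma sort_closed_set_min_zero p :
  (forall k, exists i, (k <= zero_count p i)%nat) -> min_omega1 (sort_closed_set p) 0.
Proof.
  intros Hunb. split; [split|].
  - left; reflexivity.
  - intros (i & _ & He). pose proof (half_pow_pos (zero_count p i)). lra.
  - intros z [[-> | [j ->]] Hn]; [lra|]. exfalso. apply Hn.
    destruct (Hunb (S j)) as [M HM].
    destruct (zero_count_hit p M j ltac:(lia)) as (i & _ & Hi & Hzi). exists i. rewrite Hzi. auto.
Qed.

Lemma cauchy_to_sort_finite r n :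
  delta omega1 r (- half_pow n) -> delta cantor (cauchy_to_sort r) (Nat.leb n).
Proof.
  intros Hr i. pose proof (cauchy_name_approx r _ Hr (S (S i))) as Ha.
  unfold cauchy_to_sort. replace (i + 2)%nat with (S (S i)) by lia.
  destruct (r (S (S i))) as [|k]; simpl ifz.
  - left. split; auto. apply Nat.leb_gt, half_pow_small.
    change (nu 0) with 0 in Ha. rewrite Rminus_0_l, Ropp_involutive, Rabs_pos_eq in Ha; auto.
    apply Rlt_le, half_pow_pos.
  - change (nu (S k)) with (- half_pow k) in Ha.
    replace (- half_pow k - - half_pow n) with (half_pow n - half_pow k) in Ha by ring.
    apply half_pow_close_iff in Ha.
    destruct (k - i)%nat eqn:Hki; simpl ifz.
    + right. split; auto. apply Nat.leb_le, Ha. lia.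
    + left. split; auto. apply Nat.leb_gt, Nat.nle_gt. intros Hn. apply Ha in Hn. lia.
Qed.

Lemma cauchy_to_sort_zero r : delta omega1 r 0 -> delta cantor (cauchy_to_sort r) (fun _ => false).
Proof.
  intros Hr i. pose proof (cauchy_name_approx r _ Hr (S (S i))) as Ha.
  unfold cauchy_to_sort. replace (i + 2)%nat with (S (S i)) by lia.
  left. split; auto. destruct (r (S (S i))) as [|k]; simpl ifz; auto.
  change (nu (S k)) with (- half_pow k) in Ha.
  rewrite Rminus_0_r, Rabs_Ropp, Rabs_pos_eq in Ha by apply Rlt_le, half_pow_pos.
  apply half_pow_small in Ha. destruct (k - i)%nat eqn:Hki; [lia | reflexivity].
Qed.

Lemma Sort_le_min : sW_le Sort min_omega1.
Proof.
  apply (sW_le_of_total _ _ sort_to_closed cauchy_to_sort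
    sort_to_closed_computable cauchy_to_sort_computable).
  intros p b Hpb [out Hout]. exists (sort_closed_set p).
  split; [apply sort_to_closed_spec|].
  destruct Hout as [(n & Hn & _) | [Hinf _]].
  - destruct (exactly_zeros_zero_count p b n Hpb Hn) as [Hle Hattained].
    pose proof (sort_closed_set_min_finite p n Hle Hattained) as Hmin.
    split; [eauto|]. intros r y Hr Hy. rewrite (min_omega1_unique _ _ _ Hy Hmin) in Hr.
    exists (Nat.leb n). split; [apply cauchy_to_sort_finite; auto | left; eauto].
  - pose proof (sort_closed_set_min_zero p (inf_zeros_zero_count p b Hpb Hinf)) as Hmin.
    split; [eauto|]. intros r y Hr Hy. rewrite (min_omega1_unique _ _ _ Hy Hmin) in Hr.
    exists (fun _ => false). split; [apply cauchy_to_sort_zero; auto | right; auto].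
Qed.

(** * The minimum reduces to Sort *)

Definition removed (p : baire) (k : nat) : Prop :=
  exists j c, p j = S c /\ in_ball c (- half_pow k).

Lemma removed_before_spec p n k :
  (removed_before p n k = 1%nat /\
     exists j c, (j < n)%nat /\ p j = S c /\ in_ball c (- half_pow k)) \/
  (removed_before p n k = 0%nat /\
     ~ exists j c, (j < n)%nat /\ p j = S c /\ in_ball c (- half_pow k)).
Proof.
  induction n as [|n IH]; simpl.
  - right; split; auto. intros (j & c & H & _). lia.
  - destruct IH as [[-> Hex] | [-> Hno]]; simpl ifz.
    + left; split; auto. destruct Hex as (j & c & ? & ?). exists j, c; intuition lia.
    + unfold removes. destruct (p n) as [|c] eqn:Hpn; simpl ifz.
      * right; split; auto. intros (j & c & Hj & Hp & Hb).
        destruct (Nat.eq_dec j n); [subst; congruence|].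
        apply Hno; exists j, c; intuition lia.
      * rewrite Nat.sub_0_r. destruct (ball_contains_spec c k) as [[-> Hb]|[-> Hb]].
        -- left; split; auto. exists n, c; auto.
        -- right; split; auto. intros (j & c' & Hj & Hp & Hb').
           destruct (Nat.eq_dec j n) as [->|].
           ++ rewrite Hpn in Hp. injection Hp as <-. auto.
           ++ apply Hno; exists j, c'; intuition lia.
Qed.

Lemma removed_before_le1 p n k : (removed_before p n k <= 1)%nat.
Proof. destruct (removed_before_spec p n k) as [[-> _]|[-> _]]; lia. Qed.

Lemma level_mono p i j : (i <= j)%nat -> (level p i <= level p j)%nat.
Proof. induction 1; auto. cbn [level]. lia. Qed.

Lemma level_reaches p K : (forall k, (k < K)%nat -> removed p k) -> exists M, (K <= level p M)%nat.
Proof.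
  induction K as [|K IH]; intros HK; [exists 0%nat; lia|].
  destruct IH as [M HM]; [auto|].
  destruct (HK K ltac:(lia)) as (j & c & Hj & Hb).
  set (M' := max M j). assert (H1 : (K <= level p M')%nat).
  { pose proof (level_mono p M M' ltac:(lia)). lia. }
  destruct (Nat.eq_dec (level p M') K) as [HK'|]; [|exists M'; lia].
  exists (S M'). cbn [level]. rewrite HK'.
  destruct (removed_before_spec p (S M') K) as [[-> _]|[_ Hno]]; [lia|].
  exfalso. apply Hno. exists j, c. repeat split; auto. lia.
Qed.

Lemma level_le_of_not_removed p n : ~ removed p n -> forall m, (level p m <= n)%nat.
Proof.
  intros Hn m. induction m as [|m IH]; [simpl; lia|]. cbn [level].
  pose proof (removed_before_le1 p (S m) (level p m)).
  destruct (Nat.eq_dec (level p m) n) as [->|]; [|lia].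
  destruct (removed_before_spec p (S m) n) as [[_ (j & c & _ & Hj & Hb)]|[-> _]]; [|lia].
  exfalso. apply Hn. exists j, c. auto.
Qed.

Lemma level_increase p N M :
  (level p N < level p M)%nat ->
  exists i, (N <= i)%nat /\ removed_before p (S i) (level p i) <> 0%nat.
Proof.
  induction M as [|M IH]; intros H; [pose proof (level_mono p 0 N); simpl in *; lia|].
  cbn [level] in H. destruct (removed_before p (S M) (level p M)) eqn:E; [apply IH; lia|].
  destruct (le_lt_dec N M) as [L|L]; [exists M; split; auto; rewrite E; lia|].
  pose proof (level_mono p (S M) N ltac:(lia)). cbn [level] in H0. rewrite E in H0. lia.
Qed.

Definition closed_to_sort_bits (p : baire) (i : nat) : bool :=
  Nat.eqb (removed_before p (S i) (level p i)) 0.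

Lemma closed_to_sort_spec p : delta cantor (closed_to_sort p) (closed_to_sort_bits p).
Proof.
  intros i. unfold closed_to_sort, closed_to_sort_bits.
  destruct (removed_before p (S i) (level p i)); simpl; auto.
Qed.

Lemma zeros_upto_closed_to_sort p m : zeros_upto (closed_to_sort_bits p) m = level p m.
Proof.
  induction m as [|m IH]; [reflexivity|]. cbn [zeros_upto level]. rewrite IH.
  unfold closed_to_sort_bits. pose proof (removed_before_le1 p (S m) (level p m)).
  destruct (removed_before p (S m) (level p m)) as [|[|]]; simpl; lia.
Qed.

Lemma removed_below_min p A y k :
  delta closed_omega1 p A -> min_omega1 A y -> - half_pow k < y -> removed p k.
Proof.
  intros HpA [_ Hmin] Hk. apply NNPP. intros Hn.
  assert (HA : A (- half_pow k)).
  { apply HpA. split; [apply in_omega1_half_pow|]. intros (i & c & ? & ?). apply Hn.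
    exists i, c; auto. }
  apply Hmin in HA. lra.
Qed.

Lemma closed_to_sort_min_finite p A n :
  delta closed_omega1 p A -> min_omega1 A (- half_pow n) -> exactly_zeros (closed_to_sort_bits p) n.
Proof.
  intros HpA Hmin.
  assert (Hbound : forall m, (level p m <= n)%nat).
  { apply level_le_of_not_removed. intros (j & c & Hj & Hb).
    destruct Hmin as [Hn _]. apply HpA in Hn as [_ Hn]. apply Hn. eauto. }
  destruct (level_reaches p n) as [M HM].
  { intros k Hk. apply (removed_below_min p A (- half_pow n)); auto.
    pose proof (half_pow_lt k n Hk). lra. }
  exists M. intros m Hm. rewrite zeros_upto_closed_to_sort.
  pose proof (level_mono p M m Hm). specialize (Hbound m). lia.
Qed.

Lemma closed_to_sort_min_zero p A :
  delta closed_omega1 p A -> min_omega1 A 0 -> inf_zeros (closed_to_sort_bits p).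
Proof.
  intros HpA Hmin N.
  destruct (level_reaches p (S (level p N))) as [M HM].
  { intros k _. apply (removed_below_min p A 0); auto. pose proof (half_pow_pos k). lra. }
  destruct (level_increase p N (max M N)) as (i & Hi & Hr).
  { pose proof (level_mono p M (max M N) ltac:(lia)). lia. }
  exists i. split; auto. apply Nat.eqb_neq; auto.
Qed.

Lemma exactly_zeros_unique b n n' : exactly_zeros b n -> exactly_zeros b n' -> n = n'.
Proof. intros [M HM] [M' HM']. rewrite <- (HM (max M M')), <- (HM' (max M M')); lia. Qed.

Lemma exactly_zeros_not_inf b n : exactly_zeros b n -> ~ inf_zeros b.
Proof.
  intros [M HM] Hinf. destruct (Hinf M) as [i [Hi Hbi]].
  pose proof (HM i Hi). pose proof (HM (S i) ltac:(lia)). simpl in H0. rewrite Hbi in H0. lia.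
Qed.

Lemma Sort_finite b n q : exactly_zeros b n -> Sort b q -> forall i, q i = Nat.leb n i.
Proof.
  intros Hn [(n' & Hn' & Hq) | [Hinf _]].
  - rewrite (exactly_zeros_unique b n n'); auto.
  - exfalso. apply (exactly_zeros_not_inf b n); auto.
Qed.

Lemma Sort_infinite b q : inf_zeros b -> Sort b q -> forall i, q i = false.
Proof.
  intros Hinf [(n & Hn & _) | [_ Hq]]; auto.
  exfalso. apply (exactly_zeros_not_inf b n); auto.
Qed.

Lemma cantor_name_zero s q : delta cantor s q -> forall j, s j = 0%nat <-> q j = false.
Proof. intros Hs j. destruct (Hs j) as [[-> ->]|[-> ->]]; split; congruence. Qed.

Lemma zero_count_sorted s n : (forall j, s j = 0%nat <-> (j < n)%nat) ->
  forall i, zero_count s i = Nat.min i n.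
Proof.
  intros Hs i. induction i as [|i IH]; [reflexivity|]. cbn [zero_count]. rewrite IH.
  destruct (s i) eqn:E.
  - apply Hs in E. cbn [ifz]. lia.
  - assert (~ (i < n)%nat) by (intro H; apply Hs in H; congruence). cbn [ifz]; lia.
Qed.

Lemma sort_to_cauchy_finite s n : (forall j, s j = 0%nat <-> (j < n)%nat) ->
  delta omega1 (sort_to_cauchy s) (- half_pow n).
Proof.
  intros Hs. pose proof (zero_count_sorted s n Hs) as Hz.
  unfold sort_to_cauchy. cbn [delta omega1 nu]. split.
  - intros i j Hij. rewrite !Hz. apply half_pow_dist_le. lia.
  - intros eps Heps. exists n. intros m Hm. unfold R_dist. rewrite Hz.
    replace (Nat.min m n) with n by lia.
    replace (- (/2) ^ n - - half_pow n) with 0 by (unfold half_pow; ring).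
    rewrite Rabs_R0; auto.
Qed.

Lemma sort_to_cauchy_zero s : (forall j, s j = 0%nat) -> delta omega1 (sort_to_cauchy s) 0.
Proof.
  intros Hs. assert (Hz : forall i, zero_count s i = i).
  { intros i; induction i as [|i IH]; [reflexivity|].
    cbn [zero_count]. rewrite IH, Hs. simpl. lia. }
  unfold sort_to_cauchy. cbn [delta omega1 nu]. split.
  - intros i j Hij. rewrite !Hz. apply half_pow_dist_le. lia.
  - intros eps Heps. destruct (pow_lt_1_zero (/2) ltac:(rewrite Rabs_pos_eq; lra) eps Heps)
      as [N HN]. exists N. intros m Hm. unfold R_dist. rewrite Hz.
    rewrite Rminus_0_r, Rabs_Ropp. apply HN. auto.
Qed.

Lemma min_le_Sort : sW_le min_omega1 Sort.
Proof.
  apply (sW_le_of_total _ _ closed_to_sort sort_to_cauchy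
    closed_to_sort_computable sort_to_cauchy_computable).
  intros p A HpA [y Hy]. exists (closed_to_sort_bits p).
  split; [apply closed_to_sort_spec|].
  assert (Hy_omega : in_omega1 y) by (apply HpA, Hy).
  destruct Hy_omega as [-> | [n ->]].
  - pose proof (closed_to_sort_min_zero p A HpA Hy) as Hinf.
    split; [exists (fun _ => false); right; auto|].
    intros s q Hs Hq. exists 0. split; auto. apply sort_to_cauchy_zero. intros j.
    apply (cantor_name_zero s q Hs), (Sort_infinite _ _ Hinf Hq).
  - pose proof (closed_to_sort_min_finite p A n HpA Hy) as Hn.
    split; [exists (Nat.leb n); left; eauto|].
    intros s q Hs Hq. exists (- half_pow n). split; auto. apply sort_to_cauchy_finite. intros j.
    rewrite (cantor_name_zero s q Hs), (Sort_finite _ _ _ Hn Hq). apply Nat.leb_gt.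
Qed.

Theorem proposition3p1 : sW_equiv Sort min_omega1.
Proof. split; [exact Sort_le_min | exact min_le_Sort]. Qed.
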